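(* Let $\mathbb D$ be an arbitrary commutative ring with identity, and write $\mathbb D$ also for its additive group. (1) For each integer $n\ge1$, $$TS\mathcal R_n(\mathbb D)^{ab}\cong TS\mathcal A_1(\mathbb D)\times T\mathcal J_n(\mathbb D)^{ab}\cong \mathbb D\times T\mathcal J_n(\mathbb D)^{ab}.$$ (2) Considering $S\mathcal R(\mathbb D)$ and $\mathcal J(\mathbb D)$ as abstract groups, $$S\mathcal R(\mathbb D)^{ab}\cong\mathbb D\times\mathcal J(\mathbb D)^{ab}.$$
   Context: The Riordan group over $\mathbb D$ consists of pairs $(g,f)$ of formal power series $g=\sum_{k\ge0}g_kt^k$, $f=\sum_{k\ge1}f_kt^k$ in $\mathbb D[[t]]$ with $g_0,f_1$ units, identified with the lower triangular matrices $(d_{n,k})_{n,k\ge0}$, $d_{n,k}=[t^n]g f^k$; the product is $(g_1,f_1)(g_2,f_2)=(g_1\cdot(g_2\circ f_1),\,f_2\circ f_1)$, identity $(1,t)$. $S\mathcal R(\mathbb D)$ is the subgroup of pairs with $g_0=1$ and $f_1=1$. $\mathcal J(\mathbb D)$ is the subgroup $\{(1,f): f=t+f_2t^2+\cdots\}$ (the group of formal power series under substitution), and $S\mathcal A(\mathbb D)=\{(g,t):g_0=1\}$. For $n\ge0$, $TS\mathcal R_n(\mathbb D)$, $T\mathcal J_n(\mathbb D)$, $TS\mathcal A_n(\mathbb D)$ denote the groups of $(n+1)\times(n+1)$ upper-left truncations $(d_{i,j})_{0\le i,j\le n}$ of elements of $S\mathcal R(\mathbb D)$, $\mathcal J(\mathbb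 D)$, $S\mathcal A(\mathbb D)$ respectively; in particular $TS\mathcal A_1(\mathbb D)=\{\begin{pmatrix}1&0\\\alpha&1\end{pmatrix}\}\cong\mathbb D$. $G^{ab}=G/[G,G]$ denotes the abelianization (abstract commutator subgroup). *)

From mathcomp Require Import all_boot all_order all_algebra.
Set Implicit Arguments. Unset Strict Implicit. Unset Printing Implicit Defensive.
Import GRing.Theory.
Local Open Scope ring_scope.

(* Abstract groups, given as a subset [gmem] of an ambient type with an *)
(* (associative) multiplication and unit; inverses are taken inside the *)
(* ambient monoid (two-sided inverses).                                  *)
Record grp := Grp {
  gT : Type;
  gmul : gT -> gT -> gT;
  gone : gT;
  gmem : gT -> Prop }.
Arguments gmem g _ : clear implicits.
Arguments gone g : clear implicits.
Arguments gmul {g} _ _.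

Definition is_inv (G : grp) (x y : gT G) : Prop :=
  gmul x y = gone G /\ gmul y x = gone G.

Definition is_commutator (G : grp) (c : gT G) : Prop :=
  exists a b a' b', [/\ gmem G a, gmem G b, is_inv a a', is_inv b b' &
    c = gmul (gmul (gmul a' b') a) b].

Inductive in_derived (G : grp) : gT G -> Prop :=
| derived_one : in_derived (gone G)
| derived_mul c x : is_commutator c -> in_derived x -> in_derived (gmul c x).
Arguments in_derived G _ : clear implicits.

Definition ab_cong (G : grp) (x y : gT G) : Prop :=
  exists y', is_inv y y' /\ in_derived G (gmul y' x).

(* G^ab is isomorphic to H^ab: there is a map phi : G -> H inducing a
   well-defined group isomorphism G/[G,G] -> H/[H,H]. *)
Definition ab_iso (G H : grp) : Prop :=
  exists phi : gT G -> gT H,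
  [/\ (forall x, gmem G x -> gmem H (phi x)),
      (forall x y, gmem G x -> gmem G y ->
         ab_cong (phi (gmul x y)) (gmul (phi x) (phi y))),
      (forall x, gmem G x -> (in_derived G x <-> in_derived H (phi x))) &
      (forall h, gmem H h -> exists2 x, gmem G x & ab_cong (phi x) h)].

Definition prod_grp (A B : grp) : grp :=
  @Grp (gT A * gT B)%type
    (fun x y => (gmul x.1 y.1, gmul x.2 y.2))
    (gone A, gone B)
    (fun x => gmem A x.1 /\ gmem B x.2).

Section Riordan.
Variable D : comPzRingType.

Definition add_grp : grp := @Grp D (fun x y => x + y) 0 (fun _ => True).

Definition ps := nat -> D.
Definition ps_one : ps := fun n => (n == 0)%N%:R.
Definition ps_X : ps := fun n => (n == 1)%N%:R.
Definition ps_mul (a b : ps) : ps :=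
  fun n => \sum_(i < n.+1) a i * b (n - i)%N.
Definition ps_pow (f : ps) (k : nat) : ps := iter k (ps_mul f) ps_one.
(* composition g o f, for f with f_0 = 0 *)
Definition ps_comp (g f : ps) : ps :=
  fun n => \sum_(k < n.+1) g k * ps_pow f k n.

Definition SR_pair (g f : ps) : Prop := [/\ g 0%N = 1, f 0%N = 0 & f 1%N = 1].
Definition J_pair (g f : ps) : Prop := g = ps_one /\ SR_pair g f.
Definition SA_pair (g f : ps) : Prop := g 0%N = 1 /\ f = ps_X.

Definition riordan_mul (x y : ps * ps) : ps * ps :=
  (ps_mul x.1 (ps_comp y.1 x.2), ps_comp y.2 x.2).

Definition SR_grp : grp :=
  @Grp (ps * ps)%type riordan_mul (ps_one, ps_X) (fun x => SR_pair x.1 x.2).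
Definition J_grp : grp :=
  @Grp (ps * ps)%type riordan_mul (ps_one, ps_X) (fun x => J_pair x.1 x.2).

(* (n+1)x(n+1) upper-left truncation of the Riordan matrix of (g,f):
   d_{i,j} = [t^i] g f^j. *)
Definition riordan_trunc (n : nat) (g f : ps) : 'M[D]_n.+1 :=
  \matrix_(i < n.+1, j < n.+1) ps_mul g (ps_pow f j) i.

Definition trunc_grp (n : nat) (P : ps -> ps -> Prop) : grp :=
  @Grp 'M[D]_n.+1 (fun A B => A *m B) 1%:M
    (fun M => exists g f, P g f /\ M = riordan_trunc n g f).

Definition TSR_grp n := trunc_grp n SR_pair.
Definition TJ_grp n := trunc_grp n J_pair.
Definition TSA_grp n := trunc_grp n SA_pair.

End Riordan.

(* A homomorphism x |-> (k(x), j(x)) from a group G onto K x J, with K abelian, induces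
   G^ab = K x J^ab as soon as k(x) = 1 and j(x) in [J, J] force x in [G, G].
   For SR(D) take k(g, f) = g_1 and j(g, f) = (1, f): the t-coefficient of g (h o f) is
   g_1 + h_1 because f = t + ... If g_1 = 0 then (g, f) = (g, t) (1, f), where (g, t) is a
   single commutator of SR(D) and (1, f) lies in [J, J], which is inside [SR, SR].
   Truncation is a homomorphism, so the same maps work on TSR_n(D): g_1 is the (1, 0)
   entry, and the truncation of (1, f) is recovered by multiplying with that of (g^-1, t).
   Finally, the (1, 0) entry identifies TSA_1(D) with D. *)

From mathcomp Require Import all_boot all_order all_algebra.
From Stdlib Require Import FunctionalExtensionality.
From mathcomp Require Import zify.
Set Implicit Arguments. Unset Strict Implicit. Unset Printing Implicit Defensive.
Import GRing.Theory.
Local Open Scope ring_scope.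

(** * Groups inside an ambient monoid *)

Record is_group (G : grp) : Prop := IsGroup {
  group1 : gmem G (gone G);
  groupM : forall x y, gmem G x -> gmem G y -> gmem G (gmul x y);
  groupV : forall x, gmem G x -> exists x', is_inv x x';
  groupVm : forall x x', gmem G x -> is_inv x x' -> gmem G x';
  mul1g : forall x, gmem G x -> gmul (gone G) x = x }.

Definition grp_morph (G H : grp) (phi : gT G -> gT H) : Prop :=
  [/\ forall x, gmem G x -> gmem H (phi x),
      forall x y, gmem G x -> gmem G y -> phi (gmul x y) = gmul (phi x) (phi y) &
      phi (gone G) = gone H].

Definition trivial_commutators (G : grp) : Prop :=
  forall c, @is_commutator G c -> c = gone G.

Section AbstractGroups.
Variables G H : grp.
Hypothesis groupG : is_group G.

Lemma ab_cong_refl (x : gT G) : gmem G x -> ab_cong x x.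
Proof.
move=> Gx; have [x' [xx' x'x]] := groupV groupG Gx.
by exists x'; split => //; rewrite x'x; constructor.
Qed.

Lemma commutator_mem c : @is_commutator G c -> gmem G c.
Proof.
case=> [a [b [a' [b' [Ga Gb aa' bb' ->]]]]].
have Ga' := groupVm groupG Ga aa'; have Gb' := groupVm groupG Gb bb'.
by do 3![apply: groupM => //].
Qed.

Lemma in_derived_mem x : in_derived G x -> gmem G x.
Proof.
elim=> [|c y /commutator_mem Gc _ Gy]; first exact: group1.
exact: groupM.
Qed.

Variable phi : gT G -> gT H.
Hypothesis phi_morph : grp_morph phi.

Lemma morph_inv a a' : gmem G a -> is_inv a a' -> is_inv (phi a) (phi a').
Proof.
case: phi_morph => _ phiM phi1 Ga [aa' a'a].
have Ga' := groupVm groupG Ga (conj aa' a'a).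
by split; rewrite -phiM // ?aa' ?a'a phi1.
Qed.

Lemma commutator_morph c : @is_commutator G c -> @is_commutator H (phi c).
Proof.
case=> [a [b [a' [b' [Ga Gb aa' bb' ->]]]]].
have [Hphi phiM _] := phi_morph.
have Ga' := groupVm groupG Ga aa'; have Gb' := groupVm groupG Gb bb'.
exists (phi a), (phi b), (phi a'), (phi b'); split; try exact: Hphi.
- exact: morph_inv.
- exact: morph_inv.
- by rewrite !phiM //; do ?[apply: groupM => //].
Qed.

Lemma in_derived_morph x : in_derived G x -> in_derived H (phi x).
Proof.
case: phi_morph => _ phiM phi1.
elim=> [|c y Cc Dy IH]; first by rewrite phi1; constructor.
rewrite phiM; [| exact: commutator_mem | exact: in_derived_mem].
by constructor => //; apply: commutator_morph.
Qed.

End AbstractGroups.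

Section Products.
Variables K J : grp.
Hypotheses (groupK : is_group K) (groupJ : is_group J).

Lemma prod_is_group : is_group (prod_grp K J).
Proof.
split.
- by split; apply: group1.
- by move=> x y [Kx Jx] [Ky Jy]; split; apply: groupM.
- move=> x [/(groupV groupK) [k' [e1 e2]] /(groupV groupJ) [j' [f1 f2]]].
  by exists (k', j'); split; rewrite /= ?e1 ?e2 ?f1 ?f2.
- move=> x x' [Kx Jx] [e1 e2]; split.
  + by apply: (groupVm groupK Kx); split; [move/(congr1 fst): e1 | move/(congr1 fst): e2].
  + by apply: (groupVm groupJ Jx); split; [move/(congr1 snd): e1 | move/(congr1 snd): e2].
- by move=> [k j] [Kk Jj]; rewrite /= (mul1g groupK) // (mul1g groupJ).
Qed.

Lemma grp_morph_pair (G : grp) (phiK : gT G -> gT K) (phiJ : gT G -> gT J) :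
  grp_morph phiK -> grp_morph phiJ ->
  grp_morph (fun x => (phiK x, phiJ x) : gT (prod_grp K J)).
Proof.
case=> [memK homK oneK] [memJ homJ oneJ]; split => //=.
- by move=> x Gx; split; [apply: memK | apply: memJ].
- by move=> x y Gx Gy; rewrite homK // homJ.
- by rewrite oneK oneJ.
Qed.

Hypothesis abelianK : trivial_commutators K.

Lemma in_derived_prod k j :
  in_derived (prod_grp K J) (k, j) <-> k = gone K /\ in_derived J j.
Proof.
have K11 : gmul (gone K) (gone K) = gone K := mul1g groupK (group1 groupK).
split.
  move e : (k, j) => p Dp; elim: Dp k j e => [|c x Cc _ IH] k j [-> ->].
    by split; constructor.
  have [x1_1 Dx2] := IH _ _ (esym (surjective_pairing x)).
  case: Cc => [a [b [a' [b' [[Ka1 Ja2] [Kb1 Jb2] [e1 e2] [f1 f2] ->]]]]].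
  move: e1 e2 f1 f2 => [e1 e2] [e3 e4] [f1 f2] [f3 f4].
  rewrite /=; have -> : gmul (gmul (gmul a'.1 b'.1) a.1) b.1 = gone K.
    by apply: abelianK; exists a.1, b.1, a'.1, b'.1.
  rewrite x1_1 K11; split => //; constructor => //.
  by exists a.2, b.2, a'.2, b'.2.
case=> -> Dj; elim: Dj => [|c x Cc _ IH]; first by constructor.
have -> : (gone K, gmul c x) = @gmul (prod_grp K J) (gone K, c) (gone K, x).
  by rewrite /= K11.
constructor => //.
case: Cc => [a [b [a' [b' [Ja Jb [e1 e2] [f1 f2] ->]]]]].
have K1 := group1 groupK.
exists (gone K, a), (gone K, b), (gone K, a'), (gone K, b'); split => //.
- by split; rewrite /= K11 ?e1 ?e2.
- by split; rewrite /= K11 ?f1 ?f2.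
- by rewrite /= !K11.
Qed.

End Products.

Lemma grp_morph_comp (G H L : grp) (phi : gT G -> gT H) (psi : gT H -> gT L) :
  grp_morph phi -> grp_morph psi -> grp_morph (psi \o phi).
Proof.
case=> [memphi homphi onephi] [mempsi hompsi onepsi]; split => /=.
- by move=> x /memphi /mempsi.
- by move=> x y Gx Gy; rewrite homphi // hompsi //; apply: memphi.
- by rewrite onephi onepsi.
Qed.

Lemma grp_morph_incl (T : Type) (mul : T -> T -> T) (one : T) (P Q : T -> Prop) :
  (forall x, P x -> Q x) -> grp_morph (G := Grp mul one P) (H := Grp mul one Q) id.
Proof. by move=> PQ; split. Qed.

Lemma grp_morph_factor (G G' H : grp) (pi : gT G -> gT G') (psi : gT G -> gT H)
    (phi : gT G' -> gT H) :
  is_group G -> grp_morph pi -> grp_morph psi ->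
  (forall y, gmem G' y -> exists2 x, gmem G x & pi x = y) ->
  (forall x, gmem G x -> phi (pi x) = psi x) ->
  grp_morph phi.
Proof.
move=> groupG [mempi hompi onepi] [mempsi hompsi onepsi] onto phi_pi.
split.
- by move=> _ /onto [x Gx <-]; rewrite phi_pi //; apply: mempsi.
- move=> _ _ /onto [x Gx <-] /onto [y Gy <-].
  by rewrite -hompi // !phi_pi //; [apply: hompsi | apply: groupM].
- by rewrite -onepi phi_pi //; apply: group1.
Qed.

Lemma ab_iso_prod (G K J : grp) (phiK : gT G -> gT K) (phiJ : gT G -> gT J) :
  is_group G -> is_group K -> is_group J -> trivial_commutators K ->
  grp_morph phiK -> grp_morph phiJ ->
  (forall k j, gmem K k -> gmem J j ->
     exists2 x, gmem G x & phiK x = k /\ phiJ x = j) ->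
  (forall x, gmem G x -> phiK x = gone K -> in_derived J (phiJ x) ->
     in_derived G x) ->
  ab_iso G (prod_grp K J).
Proof.
move=> groupG groupK groupJ abelianK morphK morphJ onto ker.
have groupKJ := prod_is_group groupK groupJ.
have morphKJ := grp_morph_pair morphK morphJ.
have [memKJ homKJ _] := morphKJ.
exists (fun x => (phiK x, phiJ x)); split => //.
- move=> x y Gx Gy; rewrite homKJ //.
  by apply: (ab_cong_refl groupKJ); apply: (groupM groupKJ); apply: memKJ.
- move=> x Gx; split; first exact: (in_derived_morph groupG morphKJ).
  by rewrite in_derived_prod // => -[/ker]; apply.
- move=> [k j] [Kk Jj]; have [x Gx [<- <-]] := onto k j Kk Jj.
  by exists x => //; apply: (ab_cong_refl groupKJ); apply: memKJ.
Qed.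

Lemma big_ord_widen0 (R : nmodType) (F : nat -> R) m1 m2 : (m1 <= m2)%N ->
  (forall j, (m1 <= j < m2)%N -> F j = 0) ->
  \sum_(j < m1) F j = \sum_(j < m2) F j.
Proof.
move=> le12 F0; rewrite (big_ord_widen m2 F le12) big_mkcond /=.
by apply: eq_bigr => i _; case: ltnP => // le1i; rewrite F0 // le1i ltn_ord.
Qed.

Lemma exchange_big_triangle (R : nmodType) (F : nat -> nat -> R) n :
  \sum_(k < n.+1) \sum_(i < k.+1) F i k =
  \sum_(i < n.+1) \sum_(j < (n - i).+1) F i (i + j)%N.
Proof.
elim: n => [|n IH]; first by rewrite !big_ord_recl !big_ord0 /= !addr0.
rewrite big_ord_recr /= IH [in RHS]big_ord_recr /= subnn big_ord1 addn0.
rewrite [in RHS](eq_bigr (fun i : 'I_n.+1 =>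
   \sum_(j < (n - i).+1) F i (i + j)%N + F i n.+1)); last first.
  move=> i _; rewrite subSn ?(leq_ord i) // big_ord_recr /=.
  by rewrite addnS subnKC // -ltnS.
by rewrite big_split /= -addrA; congr (_ + _); rewrite big_ord_recr.
Qed.

(** * Formal power series *)

Section Riordan.
Variable D : comPzRingType.
Local Notation ps := (ps D).
Local Notation one := (ps_one D).
Local Notation X := (ps_X D).
Local Notation rmul := (@riordan_mul D).
Local Notation SR x := (SR_pair x.1 x.2).
Local Notation trunc n x := (riordan_trunc n x.1 x.2).

Lemma ps_ext (a b : ps) : (forall n, a n = b n) -> a = b.
Proof. exact: functional_extensionality. Qed.

Lemma mul1ps (a : ps) : ps_mul one a = a.
Proof.
apply: ps_ext => n; rewrite /ps_mul big_ord_recl /= mul1r subn0 big1 ?addr0 //.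
by move=> i _; rewrite mul0r.
Qed.

Lemma mulpsC (a b : ps) : ps_mul a b = ps_mul b a.
Proof.
apply: ps_ext => n; rewrite /ps_mul (reindex_inj rev_ord_inj) /=.
by apply: eq_bigr => i _; rewrite subSS subKn ?(leq_ord i) // mulrC.
Qed.

Lemma mulps1 (a : ps) : ps_mul a one = a.
Proof. by rewrite mulpsC mul1ps. Qed.

Lemma mulpsA (a b c : ps) : ps_mul a (ps_mul b c) = ps_mul (ps_mul a b) c.
Proof.
apply: ps_ext => n; rewrite /ps_mul.
under [RHS]eq_bigr do rewrite mulr_suml.
rewrite (exchange_big_triangle (fun i k => a i * b (k - i)%N * c (n - k)%N)).
apply: eq_bigr => i _; rewrite mulr_sumr; apply: eq_bigr => j _.
by rewrite addKn subnDA mulrA.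
Qed.

Lemma ps_powS (f : ps) k : ps_pow f k.+1 = ps_mul f (ps_pow f k).
Proof. by []. Qed.

Lemma ps_powD (f : ps) k m : ps_pow f (k + m) = ps_mul (ps_pow f k) (ps_pow f m).
Proof.
elim: k => [|k IH]; first by rewrite mul1ps.
by rewrite addSn !ps_powS IH mulpsA.
Qed.

Lemma coef0_ps_mul (a b : ps) : ps_mul a b 0 = a 0%N * b 0%N.
Proof. by rewrite /ps_mul big_ord1. Qed.

Lemma coef1_ps_mul (a b : ps) : ps_mul a b 1 = a 0%N * b 1%N + a 1%N * b 0%N.
Proof. by rewrite /ps_mul !big_ord_recl big_ord0 addr0. Qed.

Section Order1.
Variable f : ps.
Hypothesis f0 : f 0%N = 0.

Lemma ps_pow_lt k n : (n < k)%N -> ps_pow f k n = 0.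
Proof.
elim: k n => [//|k IH] n ltnk; rewrite ps_powS /ps_mul big1 // => -[[|i] /= lti] _.
  by rewrite f0 mul0r.
by rewrite IH ?mulr0 //; lia.
Qed.

Lemma ps_pow_diag k : f 1%N = 1 -> ps_pow f k k = 1.
Proof.
move=> f1; elim: k => [|k IH]; first by [].
rewrite ps_powS /ps_mul 2!big_ord_recl /= f0 mul0r add0r subSS subn0 f1 mul1r IH.
rewrite big1 ?addr0 // => i _.
by rewrite ps_pow_lt ?mulr0 // /bump !leq0n !add1n; have := ltn_ord i; lia.
Qed.

Lemma ps_comp_widen (g : ps) n m : (n < m)%N ->
  ps_comp g f n = \sum_(k < m) g k * ps_pow f k n.
Proof.
move=> ltnm; rewrite /ps_comp.
apply: (big_ord_widen0 (F := fun k => g k * ps_pow f k n)) => // j.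
by case/andP=> ltnj _; rewrite ps_pow_lt ?mulr0.
Qed.

Lemma coef1_ps_comp (g : ps) : ps_comp g f 1 = g 1%N * f 1%N.
Proof.
rewrite /ps_comp !big_ord_recl big_ord0 addr0 /= mulps1.
by rewrite /ps_one /= mulr0 add0r.
Qed.

Lemma coef_mul_comp (a g : ps) i m : (i < m)%N ->
  ps_mul a (ps_comp g f) i = \sum_(k < m) g k * ps_mul a (ps_pow f k) i.
Proof.
move=> ltim; rewrite /ps_mul.
under eq_bigr => l _.
  rewrite (@ps_comp_widen g (i - l) m) ?mulr_sumr; last lia.
  over.
rewrite exchange_big /=; apply: eq_bigr => k _; rewrite mulr_sumr.
by apply: eq_bigr => l _; rewrite mulrCA.
Qed.

Lemma ps_compM (a b : ps) :
  ps_comp (ps_mul a b) f = ps_mul (ps_comp a f) (ps_comp b f).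
Proof.
apply: ps_ext => n; rewrite (coef_mul_comp _ _ (ltnSn n)).
rewrite (eq_bigr (fun j : 'I_n.+1 =>
    \sum_(i < n.+1) a i * b j * ps_pow f (i + j) n)); last first.
  move=> j _; rewrite mulpsC (coef_mul_comp _ _ (ltnSn n)) mulr_sumr.
  by apply: eq_bigr => i _; rewrite ps_powD mulpsC mulrCA mulrA.
rewrite exchange_big /= /ps_comp (eq_bigr (fun k : 'I_n.+1 =>
    \sum_(i < k.+1) a i * b (k - i)%N * ps_pow f k n)); last first.
  by move=> k _; rewrite /ps_mul mulr_suml.
rewrite (exchange_big_triangle (fun i k => a i * b (k - i)%N * ps_pow f k n)).
apply: eq_bigr => i _.
rewrite (big_ord_widen0 (F := fun j => a i * b (i + j - i)%N * ps_pow f (i + j) n)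
  (m2 := n.+1)); last 2 first.
- lia.
- by move=> j /andP[lej _]; rewrite ps_pow_lt ?mulr0 //; lia.
by apply: eq_bigr => j _; rewrite addKn.
Qed.

End Order1.

Lemma coef0_ps_comp (g f : ps) : ps_comp g f 0 = g 0%N.
Proof. by rewrite /ps_comp big_ord1 mulr1. Qed.

Lemma ps_comp1 (f : ps) : ps_comp one f = one.
Proof.
apply: ps_ext => n; rewrite /ps_comp big_ord_recl /= mul1r big1 ?addr0 //.
by move=> i _; rewrite mul0r.
Qed.

Lemma ps_comp_pow (g f : ps) k : f 0%N = 0 ->
  ps_pow (ps_comp g f) k = ps_comp (ps_pow g k) f.
Proof.
move=> f0; elim: k => [|k IH]; first by rewrite ps_comp1.
by rewrite !ps_powS IH ps_compM.
Qed.

Lemma ps_compA (h g f : ps) : g 0%N = 0 -> f 0%N = 0 ->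
  ps_comp (ps_comp h g) f = ps_comp h (ps_comp g f).
Proof.
move=> g0 f0; apply: ps_ext => n; rewrite [RHS]/ps_comp.
under [RHS]eq_bigr => k _.
  rewrite ps_comp_pow // /ps_comp mulr_sumr.
  under eq_bigr do rewrite mulrA.
  over.
rewrite exchange_big /= /ps_comp; apply: eq_bigr => m _; rewrite mulr_suml.
apply: (big_ord_widen0 (F := fun k => h k * ps_pow g k m * ps_pow f m n)) => // j.
by case/andP=> ltmj _; rewrite ps_pow_lt ?mulr0 ?mul0r.
Qed.

Lemma ps_powX k : ps_pow X k = fun n => (n == k)%:R.
Proof.
elim: k => [//|k IH]; apply: ps_ext => -[|n]; rewrite ps_powS IH /ps_mul.
  by rewrite big_ord1 mul0r.
rewrite 2!big_ord_recl /= mul0r add0r mul1r subSS subn0 big1 ?addr0 //.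
by move=> i _; rewrite mul0r.
Qed.

Lemma ps_compXr (g : ps) : ps_comp g X = g.
Proof.
apply: ps_ext => n; rewrite /ps_comp (bigD1 ord_max) //= ps_powX eqxx mulr1.
rewrite big1 ?addr0 // => i neqi; rewrite ps_powX.
suff /negPf -> : n != i by rewrite mulr0.
by apply: contra neqi => /eqP eqni; apply/eqP/val_inj.
Qed.

Lemma ps_compX (f : ps) : f 0%N = 0 -> ps_comp X f = f.
Proof.
move=> f0; apply: ps_ext => -[|n]; first by rewrite coef0_ps_comp f0.
rewrite /ps_comp 2!big_ord_recl /= mul0r add0r mul1r mulps1 big1 ?addr0 //.
by move=> i _; rewrite mul0r.
Qed.

(* [tri_solve b c] solves [\sum_(k <= n) x k * c k n = b n] (for all n) by forward
   substitution, assuming [c n n = 1]. *)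
Fixpoint tri_prefix (b : ps) (c : nat -> nat -> D) (n : nat) : seq D :=
  if n is n'.+1 then
    let s := tri_prefix b c n' in rcons s (b n' - \sum_(k < n') s`_k * c k n')
  else [::].

Definition tri_solve b c : ps := fun n => (tri_prefix b c n.+1)`_n.

Lemma size_tri_prefix b c n : size (tri_prefix b c n) = n.
Proof. by elim: n => //= n IH; rewrite size_rcons IH. Qed.

Lemma nth_tri_prefix b c n k : (k < n)%N -> (tri_prefix b c n)`_k = tri_solve b c k.
Proof.
elim: n => [//|n IH] ltkn /=; rewrite nth_rcons size_tri_prefix.
case: ltnP => [/IH //|lenk]; have -> : k = n by lia.
by rewrite eqxx /tri_solve /= nth_rcons size_tri_prefix ltnn eqxx.
Qed.

Lemma tri_solveE b c n :
  tri_solve b c n = b n - \sum_(k < n) tri_solve b c k * c k n.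
Proof.
rewrite {1}/tri_solve /= nth_rcons size_tri_prefix ltnn eqxx.
by congr (_ - _); apply: eq_bigr => k _; rewrite nth_tri_prefix.
Qed.

Lemma tri_solve_sum b c n : c n n = 1 ->
  \sum_(k < n.+1) tri_solve b c k * c k n = b n.
Proof.
by move=> cnn; rewrite big_ord_recr /= cnn mulr1 [tri_solve b c n]tri_solveE addrC subrK.
Qed.

Definition ps_inv (a : ps) : ps := tri_solve one (fun k n => a (n - k)%N).

Lemma mulVps (a : ps) : a 0%N = 1 -> ps_mul (ps_inv a) a = one.
Proof. by move=> a0; apply: ps_ext => n; apply: tri_solve_sum; rewrite subnn. Qed.

Lemma mulpsV (a : ps) : a 0%N = 1 -> ps_mul a (ps_inv a) = one.
Proof. by move=> a0; rewrite mulpsC mulVps. Qed.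

Lemma ps_inv0 (a : ps) : ps_inv a 0%N = 1.
Proof. by rewrite /ps_inv tri_solveE big_ord0 subr0. Qed.

Definition ps_rev (f : ps) : ps := tri_solve X (fun k n => ps_pow f k n).

Lemma ps_rev0 (f : ps) : ps_rev f 0%N = 0.
Proof. by rewrite /ps_rev tri_solveE big_ord0 subr0. Qed.

Lemma ps_rev1 (f : ps) : ps_rev f 1%N = 1.
Proof. by rewrite /ps_rev tri_solveE big_ord1 -/(ps_rev f) ps_rev0 mul0r subr0. Qed.

Lemma ps_revK (f : ps) : f 0%N = 0 -> f 1%N = 1 -> ps_comp (ps_rev f) f = X.
Proof. by move=> f0 f1; apply: ps_ext => n; apply: tri_solve_sum; rewrite ps_pow_diag. Qed.

Lemma ps_revKV (f : ps) : f 0%N = 0 -> f 1%N = 1 -> ps_comp f (ps_rev f) = X.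
Proof.
move=> f0 f1; have revrev : ps_rev (ps_rev f) = f.
  rewrite -[LHS]ps_compXr -(ps_revK f0 f1) -ps_compA ?ps_rev0 //.
  by rewrite ps_revK ?ps_rev0 ?ps_rev1 // ps_compX.
by rewrite -{1}revrev ps_revK ?ps_rev0 ?ps_rev1.
Qed.

Lemma ps_revX : ps_rev X = X.
Proof. by rewrite -[LHS]ps_compXr ps_revK. Qed.

(** * The Riordan group and its truncations *)

Definition riordan_inv (x : ps * ps) : ps * ps :=
  (ps_comp (ps_inv x.1) (ps_rev x.2), ps_rev x.2).
Local Notation rinv := riordan_inv.

Lemma riordan_mulA x y z : x.2 0%N = 0 -> y.2 0%N = 0 ->
  rmul (rmul x y) z = rmul x (rmul y z).
Proof.
move: x y z => [x1 x2] [y1 y2] [z1 z2] /= x0 y0; rewrite /riordan_mul /=.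
by rewrite ps_compM // !ps_compA // mulpsA.
Qed.

Lemma riordan_mul1 x : rmul (one, X) x = x.
Proof. by case: x => g f; rewrite /riordan_mul /= !ps_compXr mul1ps. Qed.

Lemma riordan_mulx1 x : x.2 0%N = 0 -> rmul x (one, X) = x.
Proof. by case: x => g f /= f0; rewrite /riordan_mul /= ps_comp1 mulps1 ps_compX. Qed.

Lemma riordan_factor (g f : ps) : rmul (g, X) (one, f) = (g, f).
Proof. by rewrite /riordan_mul /= ps_comp1 mulps1 ps_compXr. Qed.

Lemma riordan_mul_SA (g h : ps) : rmul (g, X) (h, X) = (ps_mul g h, X).
Proof. by rewrite /riordan_mul /= !ps_compXr. Qed.

Lemma SR_pair_mul x y : SR x -> SR y -> SR (rmul x y).
Proof.
move: x y => [g f] [g' f'] [/= g0 f0 f1] [/= g'0 f'0 f'1]; split => /=.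
- by rewrite coef0_ps_mul coef0_ps_comp g0 g'0 mulr1.
- by rewrite coef0_ps_comp.
- by rewrite coef1_ps_comp // f1 f'1 mulr1.
Qed.

Lemma coef1_riordan_mul x y : SR x -> SR y ->
  (rmul x y).1 1%N = x.1 1%N + y.1 1%N.
Proof.
move: x y => [g f] [g' f'] [/= g0 f0 f1] [/= g'0 f'0 f'1].
by rewrite coef1_ps_mul coef1_ps_comp // coef0_ps_comp g0 f1 g'0 mul1r !mulr1 addrC.
Qed.

Lemma SR_pair_inv x : SR (rinv x).
Proof. by split; rewrite /= ?coef0_ps_comp ?ps_inv0 ?ps_rev0 ?ps_rev1. Qed.

Lemma riordan_mulV x : SR x -> rmul x (rinv x) = (one, X).
Proof.
case: x => [g f] [/= g0 f0 f1]; rewrite /riordan_mul /=.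
by rewrite ps_compA ?ps_rev0 // ps_revK // ps_compXr mulpsV.
Qed.

Lemma riordan_mulVr x : SR x -> rmul (rinv x) x = (one, X).
Proof.
case: x => [g f] [/= g0 f0 f1]; rewrite /riordan_mul /=.
by rewrite -ps_compM ?ps_rev0 // mulVps // ps_comp1 ps_revKV.
Qed.

Lemma riordan_inv_unique x x' : SR x -> rmul x x' = (one, X) -> x' = rinv x.
Proof.
move=> SRx xx'; have [_ x0 _] := SRx; have [_ x'0 _] := SR_pair_inv x.
rewrite -[x']riordan_mul1 -(riordan_mulVr SRx) riordan_mulA //.
by rewrite xx' riordan_mulx1.
Qed.

Record riordan_subgroup (P : ps -> ps -> Prop) : Prop := RiordanSubgroup {
  subgroup_SR : forall g f, P g f -> SR_pair g f;
  subgroup1 : P one X;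
  subgroupM : forall x y, P x.1 x.2 -> P y.1 y.2 -> P (rmul x y).1 (rmul x y).2;
  subgroupV : forall x, P x.1 x.2 -> P (rinv x).1 (rinv x).2 }.

Definition riordan_grp (P : ps -> ps -> Prop) : grp :=
  @Grp (ps * ps) rmul (one, X) (fun x => P x.1 x.2).

Lemma riordan_is_group P : riordan_subgroup P -> is_group (riordan_grp P).
Proof.
case=> PSR P1 PM PV; split => //= [x Px|x x' Px [xx' _]|x _].
- by exists (rinv x); split; [apply: riordan_mulV | apply: riordan_mulVr];
    apply: PSR.
- by rewrite (riordan_inv_unique (PSR _ _ Px) xx'); apply: PV.
- exact: riordan_mul1.
Qed.

Lemma SR_subgroup : riordan_subgroup (@SR_pair D).
Proof.
split => // [x y|x _]; [exact: SR_pair_mul | exact: SR_pair_inv].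
Qed.

Lemma J_subgroup : riordan_subgroup (@J_pair D).
Proof.
split => [g f [] //| // | [g f] [g' f'] [/= -> SRx] [/= -> SRy] | [g f] [/= -> SRx]].
- split; last exact: (SR_pair_mul (x := (one, f)) (y := (one, f')) SRx SRy).
  by rewrite /= /riordan_mul /= ps_comp1 mul1ps.
- split; last exact: (SR_pair_inv (one, f)).
  have inv1 : ps_inv one = one by rewrite -[ps_inv one]mulps1 mulVps.
  by rewrite /= inv1 ps_comp1.
Qed.

Lemma SA_subgroup : riordan_subgroup (@SA_pair D).
Proof.
split => [g f [g0 ->] // | // | [g f] [g' f'] [/= g0 ->] [/= g'0 ->] | [g f] [/= g0 ->]].
- by split; rewrite /riordan_mul /= ?ps_compXr // coef0_ps_mul g0 g'0 mulr1.
- by split; rewrite /= ps_revX // coef0_ps_comp ps_inv0.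
Qed.

Definition ps_eq_upto n (a b : ps) := forall i, (i <= n)%N -> a i = b i.

Lemma ps_mul_eq_upto n a a' b b' : ps_eq_upto n a a' -> ps_eq_upto n b b' ->
  ps_eq_upto n (ps_mul a b) (ps_mul a' b').
Proof.
move=> eqa eqb i lein; apply: eq_bigr => k _.
by rewrite eqa ?eqb //; have := ltn_ord k; lia.
Qed.

Lemma riordan_trunc_eq_upto n g g' f : ps_eq_upto n g g' ->
  riordan_trunc n g f = riordan_trunc n g' f.
Proof.
move=> eqg; apply/matrixP => i j; rewrite !mxE.
exact: (ps_mul_eq_upto eqg (fun _ _ => erefl) (ltn_ord i)).
Qed.

Lemma riordan_truncM n x y : x.2 0%N = 0 ->
  trunc n (rmul x y) = trunc n x *m trunc n y.
Proof.
move=> x0; apply/matrixP => i j; rewrite !mxE /riordan_mul /=.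
rewrite ps_comp_pow // -mulpsA -ps_compM // (coef_mul_comp x0 _ _ (ltn_ord i)).
by apply: eq_bigr => k _; rewrite !mxE mulrC.
Qed.

Lemma riordan_trunc1 n : riordan_trunc n one X = 1%:M.
Proof. by apply/matrixP => i j; rewrite !mxE mul1ps ps_powX. Qed.

Section TruncatedSubgroup.
Variables (n : nat) (P : ps -> ps -> Prop).
Hypothesis subP : riordan_subgroup P.

Lemma trunc_mulV x : SR x -> trunc n x *m trunc n (rinv x) = 1%:M.
Proof.
move=> SRx; have [_ x0 _] := SRx.
by rewrite -riordan_truncM // riordan_mulV //; exact: riordan_trunc1.
Qed.

Lemma trunc_mulVr x : SR x -> trunc n (rinv x) *m trunc n x = 1%:M.
Proof.
move=> SRx; have [_ x'0 _] := SR_pair_inv x.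
by rewrite -riordan_truncM // riordan_mulVr //; exact: riordan_trunc1.
Qed.

Lemma trunc_is_group : is_group (trunc_grp n P).
Proof.
have SRP x : P x.1 x.2 -> SR x by move/(subgroup_SR subP).
split => /=.
- by exists one, X; split; [apply: subgroup1 | rewrite riordan_trunc1].
- move=> _ _ [g [f [Px ->]]] [g' [f' [Py ->]]].
  exists (rmul (g, f) (g', f')).1, (rmul (g, f) (g', f')).2; split.
    exact: (subgroupM subP (x := (g, f)) (y := (g', f'))).
  by rewrite riordan_truncM //; case: (SRP (g, f) Px).
- move=> _ [g [f [Px ->]]]; exists (trunc n (rinv (g, f))).
  have SRx := SRP (g, f) Px.
  by split; [apply: (trunc_mulV SRx) | apply: (trunc_mulVr SRx)].
- move=> _ M' [g [f [Px ->]]] [_ /= M'M].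
  exists (rinv (g, f)).1, (rinv (g, f)).2; split.
    exact: (subgroupV subP (x := (g, f))).
  by rewrite -[M']mulmx1 -(trunc_mulV (SRP (g, f) Px)) mulmxA M'M mul1mx.
- by move=> M _; rewrite mul1mx.
Qed.

Lemma trunc_morph :
  grp_morph (G := riordan_grp P) (H := trunc_grp n P) (fun x => trunc n x).
Proof.
split => /= [x Px | x y Px _ | ]; last exact: riordan_trunc1.
- by exists x.1, x.2.
- by apply: riordan_truncM; have [] := subgroup_SR subP Px.
Qed.

Lemma trunc_onto M : gmem (trunc_grp n P) M ->
  exists2 x, gmem (riordan_grp P) x & trunc n x = M.
Proof. by case=> g [f [Pgf ->]]; exists (g, f). Qed.

End TruncatedSubgroup.

(** * Abelianizations *)

Lemma add_is_group : is_group (add_grp D).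
Proof.
split => //= [x _|x _]; last exact: add0r.
by exists (- x); rewrite /is_inv /= subrr addNr.
Qed.

Lemma add_trivial_commutators : trivial_commutators (add_grp D).
Proof.
move=> _ [a [b [a' [b' [_ _ [_ /= a'a] [_ /= b'b] ->]]]]] /=.
by rewrite -addrA addrACA a'a b'b addr0.
Qed.

Definition one_plus_at (a : D) : ps := fun n => one n + (n == 1)%:R * a.

Lemma one_plus_at0 a : one_plus_at a 0 = 1.
Proof. by rewrite /one_plus_at mul0r addr0. Qed.

Lemma one_plus_at1 a : one_plus_at a 1 = a.
Proof. by rewrite /one_plus_at mul1r add0r. Qed.

Lemma ps_comp_one_plus_at a (f : ps) : f 0%N = 0 ->
  ps_comp (one_plus_at a) f = fun n => one n + a * f n.
Proof.
move=> f0; apply: ps_ext => -[|n].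
  by rewrite coef0_ps_comp one_plus_at0 f0 mulr0 addr0.
rewrite /ps_comp 2!big_ord_recl big1 => [|i _]; last first.
  by rewrite /one_plus_at /= mul0r addr0 mul0r.
by rewrite /bump /= one_plus_at0 one_plus_at1 mulps1 mul1r addr0.
Qed.

(* With psi = g (1 + t) - 1 we get (1 + t) o psi = g (1 + t), whence
   (g, t) = [(1 + t, t), (1, psi^<-1>)]. *)
Lemma SR_commutator_gX (g : ps) : g 0%N = 1 -> g 1%N = 0 ->
  @is_commutator (SR_grp D) (g, X).
Proof.
move=> g0 g1; pose h := one_plus_at 1.
pose psi : ps := fun n => ps_mul g h n - one n.
have h0 : h 0%N = 1 := one_plus_at0 1.
have h1 : h 1%N = 1 := one_plus_at1 1.
have psi0 : psi 0%N = 0 by rewrite /psi coef0_ps_mul g0 h0 mulr1 subrr.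
have psi1 : psi 1%N = 1.
  by rewrite /psi coef1_ps_mul g0 g1 h0 h1 mul0r addr0 mul1r subr0.
have h_psi : ps_comp h psi = ps_mul g h.
  by rewrite ps_comp_one_plus_at //; apply: ps_ext => n; rewrite mul1r addrC subrK.
exists (h, X), (one, ps_rev psi), (ps_inv h, X), (one, psi); split.
- by split.
- by split; rewrite /= ?ps_rev0 ?ps_rev1.
- by split; rewrite /= /riordan_mul /= !ps_compXr ?mulpsV ?mulVps.
- by split; rewrite /= /riordan_mul /= ps_comp1 mul1ps ?ps_revKV ?ps_revK.
rewrite /= /riordan_mul /= ps_comp1 !ps_compXr mulps1 ps_compX // h_psi.
by rewrite ps_comp1 mulps1 (mulpsC g) mulpsA mulVps // mul1ps ps_revK.
Qed.

Lemma SR_pair_one_plus_at a (f : ps) : f 0%N = 0 -> f 1%N = 1 ->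
  SR_pair (one_plus_at a) f.
Proof. by split => //; apply: one_plus_at0. Qed.

Lemma SR_is_group : is_group (SR_grp D).
Proof. exact: riordan_is_group SR_subgroup. Qed.

Lemma J_is_group : is_group (J_grp D).
Proof. exact: riordan_is_group J_subgroup. Qed.

Lemma SR_coef1_morph :
  grp_morph (G := SR_grp D) (H := add_grp D) (fun x => x.1 1%N).
Proof. by split => // x y; apply: coef1_riordan_mul. Qed.

Lemma SR_Jpart_morph :
  grp_morph (G := SR_grp D) (H := J_grp D) (fun x => (one, x.2)).
Proof.
split => //= [x [_ f0 f1] | x y _ _]; first by split.
by rewrite /riordan_mul /= ps_comp1 mul1ps.
Qed.

Lemma J_sub_SR_morph : grp_morph (G := J_grp D) (H := SR_grp D) id.
Proof. by apply: grp_morph_incl => x []. Qed.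

Lemma SR_ab_iso : ab_iso (SR_grp D) (prod_grp (add_grp D) (J_grp D)).
Proof.
apply: (ab_iso_prod SR_is_group add_is_group J_is_group add_trivial_commutators
  SR_coef1_morph SR_Jpart_morph).
- move=> a [_ f] _ [/= -> [_ f0 f1]].
  by exists (one_plus_at a, f); [apply: SR_pair_one_plus_at | rewrite /= one_plus_at1].
- move=> [g f] [/= g0 f0 f1] /= g1 Dj; rewrite -riordan_factor.
  apply: derived_mul; first exact: SR_commutator_gX.
  exact: (in_derived_morph J_is_group J_sub_SR_morph Dj).
Qed.

Section TruncatedAbelianization.
Variable n : nat.

Definition first_col_ps (M : 'M[D]_n.+1) : ps :=
  fun i => if (i <= n)%N then M (inord i) ord0 else 0.

Definition mx_coef1 (M : 'M[D]_n.+1) : D := M (inord 1) ord0.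

Definition mx_Jpart (M : 'M[D]_n.+1) : 'M[D]_n.+1 :=
  riordan_trunc n (ps_inv (first_col_ps M)) X *m M.

Lemma first_col_ps_trunc g f : ps_eq_upto n (first_col_ps (riordan_trunc n g f)) g.
Proof. by move=> i lein; rewrite /first_col_ps lein mxE inordK //= mulps1. Qed.

Lemma mx_Jpart_trunc g f : SR_pair g f ->
  mx_Jpart (riordan_trunc n g f) = riordan_trunc n one f.
Proof.
move=> [g0 _ _].
have c0 : first_col_ps (riordan_trunc n g f) 0%N = 1 by rewrite first_col_ps_trunc.
rewrite /mx_Jpart -(@riordan_truncM n (ps_inv _, X) (g, f)) //.
rewrite /riordan_mul /= !ps_compXr -(mulVps c0); apply: riordan_trunc_eq_upto.
by apply: ps_mul_eq_upto => // i lein; rewrite first_col_ps_trunc.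
Qed.

Hypothesis n_gt0 : (0 < n)%N.

Lemma mx_coef1_trunc g f : mx_coef1 (riordan_trunc n g f) = g 1%N.
Proof. by rewrite /mx_coef1 mxE inordK //= mulps1. Qed.

Lemma mx_coef1_1 : mx_coef1 1%:M = 0.
Proof. by rewrite -riordan_trunc1 mx_coef1_trunc. Qed.

Lemma TSR_coef1_morph :
  grp_morph (G := TSR_grp D n) (H := add_grp D) mx_coef1.
Proof.
apply: (grp_morph_factor SR_is_group (trunc_morph n SR_subgroup) SR_coef1_morph).
- exact: trunc_onto.
- by move=> x _; apply: mx_coef1_trunc.
Qed.

Lemma TSR_Jpart_morph :
  grp_morph (G := TSR_grp D n) (H := TJ_grp D n) mx_Jpart.
Proof.
apply: (grp_morph_factor SR_is_group (trunc_morph n SR_subgroup)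
  (grp_morph_comp SR_Jpart_morph (trunc_morph n J_subgroup))).
- exact: trunc_onto.
- by move=> [g f] SRx; apply: mx_Jpart_trunc.
Qed.

Lemma TSR_onto a M : gmem (TJ_grp D n) M ->
  exists2 x, gmem (TSR_grp D n) x & mx_coef1 x = a /\ mx_Jpart x = M.
Proof.
case=> _ [f [[-> [_ f0 f1]] ->]].
exists (riordan_trunc n (one_plus_at a) f).
  by exists (one_plus_at a), f; split => //; apply: SR_pair_one_plus_at.
by rewrite mx_coef1_trunc one_plus_at1 mx_Jpart_trunc //; apply: SR_pair_one_plus_at.
Qed.

Lemma TJ_sub_TSR_morph : grp_morph (G := TJ_grp D n) (H := TSR_grp D n) id.
Proof. by apply: grp_morph_incl => M [g [f [[_ SRgf] ->]]]; exists g, f. Qed.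

Lemma TSR_kernel M : gmem (TSR_grp D n) M -> mx_coef1 M = 0 ->
  in_derived (TJ_grp D n) (mx_Jpart M) -> in_derived (TSR_grp D n) M.
Proof.
case=> g [f [[g0 f0 f1] ->]]; rewrite mx_coef1_trunc mx_Jpart_trunc // => g1 Dj.
have -> : riordan_trunc n g f = trunc n (g, X) *m trunc n (one, f).
  by rewrite -riordan_truncM // riordan_factor.
apply: derived_mul.
  exact: (commutator_morph SR_is_group (trunc_morph n SR_subgroup) (SR_commutator_gX g0 g1)).
exact: (in_derived_morph (trunc_is_group n J_subgroup) TJ_sub_TSR_morph Dj).
Qed.

Lemma TSR_ab_iso_add : ab_iso (TSR_grp D n) (prod_grp (add_grp D) (TJ_grp D n)).
Proof.
apply: (ab_iso_prod (trunc_is_group n SR_subgroup) add_is_group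
  (trunc_is_group n J_subgroup) add_trivial_commutators).
- exact: TSR_coef1_morph.
- exact: TSR_Jpart_morph.
- by move=> a M _; apply: TSR_onto.
- exact: TSR_kernel.
Qed.

End TruncatedAbelianization.

Definition TSA1_mx (a : D) : 'M[D]_2 := riordan_trunc 1 (one_plus_at a) X.

Lemma TSA_trivial_commutators m : trivial_commutators (TSA_grp D m).
Proof.
have TSA_comm M N : gmem (TSA_grp D m) M -> gmem (TSA_grp D m) N -> M *m N = N *m M.
  move=> [g [_ [[_ ->] ->]]] [h [_ [[_ ->] ->]]].
  by rewrite -!(@riordan_truncM m (_, X) (_, X)) // !riordan_mul_SA mulpsC.
move=> _ [a [b [a' [b' [TSAa TSAb [_ /= a'a] [_ /= b'b] ->]]]]] /=.
by rewrite -!mulmxA (TSA_comm a b) // (mulmxA b') b'b mul1mx a'a.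
Qed.

Lemma TSA1_mx_morph : grp_morph (G := add_grp D) (H := TSA_grp D 1) TSA1_mx.
Proof.
split => //= [a _ | a b _ _ | ].
- by exists (one_plus_at a), X; split => //; split => //; apply: one_plus_at0.
- rewrite /TSA1_mx -(@riordan_truncM 1 (_, X) (_, X)) // riordan_mul_SA.
  apply: riordan_trunc_eq_upto => -[|[|i]] // _.
    by rewrite /= coef0_ps_mul !one_plus_at0 mulr1.
  by rewrite /= coef1_ps_mul !one_plus_at0 !one_plus_at1 mul1r mulr1 addrC.
- rewrite /TSA1_mx; have -> : one_plus_at 0 = one.
    by apply: ps_ext => i; rewrite /one_plus_at mulr0 addr0.
  exact: riordan_trunc1.
Qed.

Lemma mx_coef1_TSA1_mx a : mx_coef1 (TSA1_mx a) = a.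
Proof. by rewrite mx_coef1_trunc // one_plus_at1. Qed.

Lemma TSA1_mx_coef1 M : gmem (TSA_grp D 1) M -> TSA1_mx (mx_coef1 M) = M.
Proof.
case=> g [_ [[g0 ->] ->]]; rewrite mx_coef1_trunc //.
by apply: riordan_trunc_eq_upto => -[|[|i]] // _; rewrite ?one_plus_at0 ?one_plus_at1.
Qed.

Lemma TSR_ab_iso_TSA n : (0 < n)%N ->
  ab_iso (TSR_grp D n) (prod_grp (TSA_grp D 1) (TJ_grp D n)).
Proof.
move=> n_gt0.
apply: (ab_iso_prod (trunc_is_group n SR_subgroup) (trunc_is_group 1 SA_subgroup)
  (trunc_is_group n J_subgroup) (TSA_trivial_commutators (m := 1))
  (grp_morph_comp (TSR_coef1_morph n_gt0) TSA1_mx_morph) (TSR_Jpart_morph n)).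
- move=> M N TSAM TJN; have [x TSRx [cx <-]] := TSR_onto n_gt0 (mx_coef1 M) TJN.
  by exists x => //=; rewrite cx TSA1_mx_coef1.
- move=> x TSRx /= cx; apply: TSR_kernel => //.
  by rewrite -(mx_coef1_TSA1_mx (mx_coef1 x)) cx mx_coef1_1.
Qed.

End Riordan.

Theorem theorem3 (D : comPzRingType) :
  (forall n : nat, (1 <= n)%N ->
     ab_iso (TSR_grp D n) (prod_grp (TSA_grp D 1) (TJ_grp D n)) /\
     ab_iso (TSR_grp D n) (prod_grp (add_grp D) (TJ_grp D n))) /\
  ab_iso (SR_grp D) (prod_grp (add_grp D) (J_grp D)).
Proof.
split; last exact: SR_ab_iso.
by move=> n n_gt0; split; [exact: TSR_ab_iso_TSA | exact: TSR_ab_iso_add].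
Qed.
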